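(* Let $\alpha,\beta,\gamma,\eta>0$ and $\rho\in(0,1)$ with $\gamma\geq\alpha$, and consider the system $$S'=-\beta IS+\gamma(1-S-I-R)+\eta R,\qquad I'=\rho\beta IS-\alpha I+\beta I(1-S-I-R),\qquad R'=\alpha I-\eta R.$$ (a) The system has a unique disease-free equilibrium (an equilibrium with $I=0$), namely $\mathcal{E}_0=(S,I,R)=(1,0,0)$, and it exists for every such choice of parameters. (b) Let $\mathcal{R}_0:=\frac{\rho\beta}{\alpha}$. Then $\mathcal{E}_0$ is locally asymptotically stable if $\mathcal{R}_0<1$ and unstable if $\mathcal{R}_0>1$.
   Context: This is the reduced form (using $W=1-S-I-R$) of a four-compartment model $S,W,I,R$ with total population normalized to $1$, in which the transmission rates from $S$ and from $W$ are taken equal to $\beta$. The state $(S,I,R)$ corresponds to nonnegative compartments with $S+I+R\le 1$. *)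

From Stdlib Require Import Reals.
From Coquelicot Require Import Coquelicot.
Open Scope R_scope.

Definition state := (R * R * R)%type.
Definition pS (x : state) : R := fst (fst x).
Definition pI (x : state) : R := snd (fst x).
Definition pR (x : state) : R := snd x.

(* The vector field of the reduced model (W = 1 - S - I - R). *)
Definition sirw_field (alpha beta gamma eta rho : R) (x : state) : state :=
  let s := pS x in let i := pI x in let r := pR x in
  (( - beta * i * s + gamma * (1 - s - i - r) + eta * r,
     rho * beta * i * s - alpha * i + beta * i * (1 - s - i - r)),
     alpha * i - eta * r).

Definition basic_R0 (alpha beta rho : R) : R := rho * beta / alpha.

Definition dist3 (x y : state) : R :=
  sqrt ((pS x - pS y)^2 + (pI x - pI y)^2 + (pR x - pR y)^2).

Definition is_equilibrium (F : state -> state) (xe : state) : Prop :=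
  F xe = (0, 0, 0).

Definition sol_on (F : state -> state) (x : R -> state) (T : R) : Prop :=
  (forall t, 0 < t < T ->
     is_derive (fun u => pS (x u)) t (pS (F (x t))) /\
     is_derive (fun u => pI (x u)) t (pI (F (x t))) /\
     is_derive (fun u => pR (x u)) t (pR (F (x t)))) /\
  filterlim (fun u => pS (x u)) (at_right 0) (locally (pS (x 0))) /\
  filterlim (fun u => pI (x u)) (at_right 0) (locally (pI (x 0))) /\
  filterlim (fun u => pR (x u)) (at_right 0) (locally (pR (x 0))).

Definition sol_global (F : state -> state) (x : R -> state) : Prop :=
  forall T, 0 < T -> sol_on F x T.

Definition lyap_stable (F : state -> state) (xe : state) : Prop :=
  forall eps, 0 < eps -> exists delta, 0 < delta /\
    forall (x : R -> state) (T : R), 0 < T -> sol_on F x T ->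
      dist3 (x 0) xe < delta ->
      forall t, 0 <= t < T -> dist3 (x t) xe < eps.

Definition loc_attractive (F : state -> state) (xe : state) : Prop :=
  exists delta, 0 < delta /\
    forall x : R -> state, sol_global F x -> dist3 (x 0) xe < delta ->
      filterlim (fun t => dist3 (x t) xe) (Rbar_locally p_infty) (locally 0).

Definition loc_asymp_stable (F : state -> state) (xe : state) : Prop :=
  lyap_stable F xe /\ loc_attractive F xe.

Definition unstable (F : state -> state) (xe : state) : Prop :=
  ~ lyap_stable F xe.

From Stdlib Require Import Reals Lra Lia Psatz.
From Coquelicot Require Import Coquelicot.
Open Scope R_scope.

(** At I = 0 the equations R' = 0 and S' = 0 force R = 0 and S = 1.

    For R0 < 1, write I' = I G with G = rho beta S - alpha + beta W; near E0 the
    factor G is close to rho beta - alpha < 0. The quadratic function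
    V = (S + R - 1)^2 + R^2 + K I^2 then satisfies V' <= - c V near E0 once the
    weight K is large enough for the I^2 term to absorb the cross terms (AM-GM).
    Hence V (1 + c t) is nonincreasing along solutions starting close to E0, which
    gives stability and convergence.

    For R0 > 1, G >= (rho beta - alpha) / 2 > 0 near E0, so I grows at least
    linearly while a solution stays near E0. If E0 were stable, the solution from
    (1, i0, 0) would stay near E0 forever, which is absurd. That solution is built
    by Picard iteration for the field truncated outside a box: the truncation is
    globally Lipschitz and bounded, and it agrees with the field near E0. *)

(** * Calculus on the half-line *)

Definition right_cont0 (f : R -> R) : Prop := filterlim f (at_right 0) (locally (f 0)).

Lemma right_cont0_eps (f : R -> R) : right_cont0 f ->
  forall e, 0 < e -> exists d, 0 < d /\ forall u, 0 < u < d -> Rabs (f u - f 0) < e.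
Proof.
  intros Hf e He.
  destruct (proj1 (filterlim_locally f (f 0)) Hf (mkposreal e He)) as [d Hd].
  exists d; split; [apply cond_pos|]. intros u [Hu0 Hud].
  apply Hd; [|exact Hu0]. change (Rabs (u - 0) < d). rewrite Rminus_0_r, Rabs_pos_eq; lra.
Qed.

Lemma continuous_eps (g : R -> R) (m : R) : continuous g m ->
  forall e, 0 < e -> exists d, 0 < d /\ forall v, Rabs (v - m) < d -> Rabs (g v - g m) < e.
Proof.
  intros Hg e He.
  destruct (proj1 (filterlim_locally g (g m)) Hg (mkposreal e He)) as [d Hd].
  exists d; split; [apply cond_pos|]. intros v Hv. exact (Hd v Hv).
Qed.

Lemma is_derive_val (f : R -> R) (t l l' : R) : is_derive f t l -> l = l' -> is_derive f t l'.
Proof. intros H <-. exact H. Qed.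

(* Coquelicot's rules with their values written in [Rplus]/[Rmult] form, so that
   [ring] can compare them. *)
Lemma is_derive_Rconst (c t : R) : is_derive (fun _ => c) t 0.
Proof. exact (is_derive_const c t). Qed.

Lemma is_derive_Rid (t : R) : is_derive (fun u => u) t 1.
Proof. exact (is_derive_id t). Qed.

Lemma is_derive_Rplus (f g : R -> R) (t a b : R) :
  is_derive f t a -> is_derive g t b -> is_derive (fun u => f u + g u) t (a + b).
Proof. exact (is_derive_plus f g t a b). Qed.

Lemma is_derive_Rminus (f g : R -> R) (t a b : R) :
  is_derive f t a -> is_derive g t b -> is_derive (fun u => f u - g u) t (a - b).
Proof. exact (is_derive_minus f g t a b). Qed.

Lemma is_derive_Rmult (f g : R -> R) (t a b : R) :
  is_derive f t a -> is_derive g t b -> is_derive (fun u => f u * g u) t (a * g t + f t * b).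
Proof. intros Hf Hg. exact (is_derive_mult f g t a b Hf Hg Rmult_comm). Qed.

Lemma continuous_of_is_derive (f : R -> R) (t l : R) : is_derive f t l -> continuous f t.
Proof. intro Hf. apply (@ex_derive_continuous R_AbsRing R_NormedModule). exists l. exact Hf. Qed.

Lemma right_cont0_of_continuous (f : R -> R) : continuous f 0 -> right_cont0 f.
Proof. apply filterlim_filter_le_1, filter_le_within. Qed.

Lemma right_cont0_const (c : R) : right_cont0 (fun _ => c).
Proof. apply filterlim_const. Qed.

Lemma right_cont0_id : right_cont0 (fun u => u).
Proof. apply right_cont0_of_continuous, continuous_id. Qed.

Lemma right_cont0_plus (f g : R -> R) :
  right_cont0 f -> right_cont0 g -> right_cont0 (fun u => f u + g u).
Proof. intros Hf Hg. exact (filterlim_comp_2 _ _ _ Hf Hg (filterlim_plus _ _)). Qed.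

Lemma right_cont0_mult (f g : R -> R) :
  right_cont0 f -> right_cont0 g -> right_cont0 (fun u => f u * g u).
Proof. intros Hf Hg. exact (filterlim_comp_2 _ _ _ Hf Hg (filterlim_mult _ _)). Qed.

Lemma right_cont0_minus (f g : R -> R) :
  right_cont0 f -> right_cont0 g -> right_cont0 (fun u => f u - g u).
Proof.
  intros Hf Hg. unfold Rminus.
  apply right_cont0_plus; [exact Hf|].
  eapply filterlim_comp; [exact Hg|apply (@filterlim_opp R_AbsRing R_NormedModule)].
Qed.

Lemma right_cont0_pow (f : R -> R) (n : nat) : right_cont0 f -> right_cont0 (fun u => f u ^ n).
Proof.
  intro Hf. induction n as [|n IH]; [apply right_cont0_const|].
  exact (right_cont0_mult _ _ Hf IH).
Qed.

Lemma le_of_continuous_left (g : R -> R) (m c : R) : 0 < m -> continuous g m ->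
  (forall u, 0 <= u < m -> g u < c) -> g m <= c.
Proof.
  intros Hm Hg Hlt. apply Rnot_lt_le. intro Hc.
  destruct (continuous_eps g m Hg (g m - c)) as [d [Hd Hball]]; [lra|].
  set (u := Rmax 0 (m - d / 2)).
  assert (Hu0 : 0 <= u) by apply Rmax_l.
  assert (Hud : m - d / 2 <= u) by apply Rmax_r.
  assert (Hum : u < m) by (unfold u, Rmax; destruct Rle_dec; lra).
  specialize (Hball u ltac:(rewrite Rabs_left; lra)). specialize (Hlt u ltac:(lra)).
  apply Rabs_lt_between in Hball. lra.
Qed.

Lemma continuous_induction (g : R -> R) (T L : R) : 0 < T -> g 0 < L -> right_cont0 g ->
  (forall t, 0 < t <= T -> continuous g t) ->
  (forall m, 0 < m <= T -> (forall u, 0 <= u < m -> g u < L) -> g m < L) ->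
  forall t, 0 <= t <= T -> g t < L.
Proof.
  intros HT Hg0 Hrc Hcont Hstep.
  set (E := fun s => 0 <= s <= T /\ forall u, 0 <= u <= s -> g u < L).
  assert (E0 : E 0) by (split; [lra|]; intros u Hu; replace u with 0 by lra; exact Hg0).
  destruct (completeness E) as [m [Hub Hlub]]; [exists T; intros s [Hs _]; lra|now exists 0|].
  assert (Hm0 : 0 <= m) by (apply Hub, E0).
  assert (HmT : m <= T) by (apply Hlub; intros s [Hs _]; lra).
  assert (Hbelow : forall u, 0 <= u < m -> g u < L).
  { intros u Hu. destruct (Classical_Prop.classic (exists s, E s /\ u < s)) as [[s [[_ Hs] Hus]]|Hno].
    - apply Hs; lra.
    - enough (m <= u) by lra. apply Hlub. intros s Hs. apply Rnot_lt_le. intro Hus. eauto. }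
  assert (Hgm : g m < L).
  { destruct (Req_dec m 0) as [->|Hm]; [exact Hg0|]. apply Hstep; [lra|exact Hbelow]. }
  assert (Hright : exists d, 0 < d /\ forall v, m <= v < m + d -> g v < L).
  { destruct (Req_dec m 0) as [->|Hm].
    - destruct (right_cont0_eps g Hrc (L - g 0)) as [d [Hd Hball]]; [lra|].
      exists d; split; [exact Hd|]. intros v Hv.
      destruct (Req_dec v 0) as [->|Hv0]; [exact Hg0|].
      specialize (Hball v ltac:(lra)). apply Rabs_lt_between in Hball. lra.
    - destruct (continuous_eps g m (Hcont m ltac:(lra)) (L - g m)) as [d [Hd Hball]]; [lra|].
      exists d; split; [exact Hd|]. intros v Hv.
      specialize (Hball v ltac:(rewrite Rabs_pos_eq; lra)). apply Rabs_lt_between in Hball. lra. }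
  destruct Hright as [d [Hd Hright]].
  assert (HmT' : m = T).
  { set (s := Rmin T (m + d / 2)).
    assert (Hs : E s).
    { split; [split; [apply Rmin_glb; lra|apply Rmin_l]|].
      intros u Hu. destruct (Rlt_or_le u m); [apply Hbelow; lra|].
      apply Hright. pose proof (Rmin_r T (m + d / 2)) as Hsd. fold s in Hsd. lra. }
    specialize (Hub s Hs). unfold s, Rmin in Hub. destruct Rle_dec; lra. }
  intros t Ht. destruct (Rlt_or_le t m); [apply Hbelow; lra|].
  replace t with m by lra. exact Hgm.
Qed.

Lemma derive_nonpos_le_init (h dh : R -> R) (t : R) : 0 < t -> right_cont0 h ->
  (forall s, 0 < s <= t -> is_derive h s (dh s)) ->
  (forall s, 0 < s < t -> dh s <= 0) -> h t <= h 0.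
Proof.
  intros Ht Hrc Hder Hneg. apply Rnot_lt_le. intro Hlt.
  destruct (right_cont0_eps h Hrc (h t - h 0)) as [d [Hd Hball]]; [lra|].
  set (e := Rmin (d / 2) (t / 2)).
  assert (He : 0 < e) by (apply Rmin_glb_lt; lra).
  assert (Hed : e <= d / 2) by apply Rmin_l.
  assert (Het : e <= t / 2) by apply Rmin_r.
  destruct (MVT_cor2 h dh e t ltac:(lra)) as [c [Hmvt Hc]].
  { intros c Hc. apply is_derive_Reals, Hder. lra. }
  specialize (Hball e ltac:(lra)). apply Rabs_lt_between in Hball.
  assert (dh c * (t - e) <= 0) by (apply Rmult_le_0_r; [apply Hneg|]; lra).
  lra.
Qed.

Lemma barrier_le_init (f df : R -> R) (T L : R) : right_cont0 f ->
  (forall t, 0 < t < T -> is_derive f t (df t)) -> f 0 < L ->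
  (forall t, 0 < t < T -> f t < L -> df t <= 0) ->
  forall t, 0 <= t < T -> f t <= f 0.
Proof.
  intros Hrc Hder Hf0 Hneg t Ht.
  destruct (Req_dec t 0) as [->|Ht0]; [lra|].
  assert (Hmono : forall m, 0 < m <= t -> (forall u, 0 < u < m -> f u < L) -> f m <= f 0).
  { intros m Hm Hbelow. apply (derive_nonpos_le_init f df); [lra|exact Hrc| |].
    - intros s Hs. apply Hder. lra.
    - intros s Hs. apply Hneg; [lra|]. apply Hbelow. lra. }
  apply Hmono; [lra|]. intros u Hu.
  apply (continuous_induction f t L); [lra|exact Hf0|exact Hrc| | |lra].
  - intros s Hs. apply (continuous_of_is_derive f s (df s)), Hder. lra.
  - intros m Hm Hbelow. eapply Rle_lt_trans; [|exact Hf0].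
    apply Hmono; [exact Hm|]. intros v Hv. apply Hbelow. lra.
Qed.

Lemma abs_sub_le_of_derive (f df g dg : R -> R) (t : R) : 0 <= t ->
  (forall s, is_derive f s (df s)) -> (forall s, is_derive g s (dg s)) ->
  (forall s, 0 < s < t -> Rabs (df s) <= dg s) -> Rabs (f t - f 0) <= g t - g 0.
Proof.
  intros Ht Hf Hg Hle.
  destruct (Req_dec t 0) as [->|Ht0]; [rewrite !Rminus_eq_0, Rabs_R0; lra|].
  assert (Hrc : forall k : R, right_cont0 (fun u => k * f u - g u)).
  { intro k. apply right_cont0_of_continuous.
    apply (continuous_of_is_derive _ 0 (k * df 0 - dg 0)).
    apply is_derive_Rminus; [apply is_derive_scal|]; auto. }
  assert (Hmono : forall k : R, (k = 1 \/ k = -1) -> k * f t - g t <= k * f 0 - g 0).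
  { intros k Hk.
    apply (derive_nonpos_le_init (fun u => k * f u - g u) (fun u => k * df u - dg u));
      [lra|apply Hrc| |].
    - intros s _. apply is_derive_Rminus; [apply is_derive_scal|]; auto.
    - intros s Hs. specialize (Hle s Hs). apply Rabs_le_between in Hle. destruct Hk; subst k; lra. }
  pose proof (Hmono 1 (or_introl eq_refl)). pose proof (Hmono (-1) (or_intror eq_refl)).
  apply Rabs_le. lra.
Qed.

Lemma right_cont0_of_le (f : R -> R) (K : R) : 0 <= K ->
  (forall u, 0 < u -> Rabs (f u - f 0) <= K * u) -> right_cont0 f.
Proof.
  intros HK Hf. apply filterlim_locally. intros eps.
  assert (Hd : 0 < eps / (K + 1)) by (apply Rdiv_lt_0_compat; [apply cond_pos|lra]).
  exists (mkposreal _ Hd). intros u Hu Hu0. simpl in Hu.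
  change (Rabs (u - 0) < eps / (K + 1)) in Hu. rewrite Rminus_0_r, Rabs_pos_eq in Hu by lra.
  change (Rabs (f u - f 0) < eps). eapply Rle_lt_trans; [apply Hf, Hu0|].
  apply Rmult_lt_compat_r with (r := K + 1) in Hu; [|lra].
  replace (eps / (K + 1) * (K + 1)) with (pos eps) in Hu by (field; lra). nra.
Qed.

Lemma abs_sub_lim_le (u : nat -> R) (l c e : R) (N : nat) : is_lim_seq u l ->
  (forall m, (N <= m)%nat -> Rabs (u m - c) <= e) -> Rabs (l - c) <= e.
Proof.
  intros Hl Hu. apply (is_lim_seq_incr_n u N) in Hl.
  assert (Hle : forall m, c - e <= u (m + N)%nat <= c + e).
  { intro m. apply Rabs_le_between', Hu. lia. }
  apply Rabs_le_between'. split.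
  - apply (is_lim_seq_le (fun _ => c - e) (fun m => u (m + N)%nat) (c - e) l); auto.
    + intro m. apply Hle.
    + apply is_lim_seq_const.
  - apply (is_lim_seq_le (fun m => u (m + N)%nat) (fun _ => c + e) l (c + e)); auto.
    + intro m. apply Hle.
    + apply is_lim_seq_const.
Qed.

(** * Sup-distance between states *)

Definition coord (p : state -> R) : Prop := p = pS \/ p = pI \/ p = pR.

Definition near (d : R) (y z : state) : Prop := forall p, coord p -> Rabs (p y - p z) <= d.

Lemma nearP (d : R) (y z : state) : near d y z <->
  Rabs (pS y - pS z) <= d /\ Rabs (pI y - pI z) <= d /\ Rabs (pR y - pR z) <= d.
Proof.
  split.
  - intro H. repeat split; apply H; unfold coord; auto.
  - intros (HS & HI & HR) p [-> | [-> | ->]]; assumption.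
Qed.

Lemma near_refl (d : R) (y : state) : 0 <= d -> near d y y.
Proof. intros Hd p _. rewrite Rminus_eq_0, Rabs_R0. exact Hd. Qed.

Lemma near_sym (d : R) (y z : state) : near d y z -> near d z y.
Proof. intros H p Hp. rewrite Rabs_minus_sym. exact (H p Hp). Qed.

Lemma near_trans (d1 d2 : R) (x y z : state) :
  near d1 x y -> near d2 y z -> near (d1 + d2) x z.
Proof.
  intros Hxy Hyz p Hp. replace (p x - p z) with ((p x - p y) + (p y - p z)) by ring.
  eapply Rle_trans; [apply Rabs_triang|]. pose proof (Hxy p Hp). pose proof (Hyz p Hp). lra.
Qed.

Lemma near_le (d d' : R) (y z : state) : d <= d' -> near d y z -> near d' y z.
Proof. intros Hd H p Hp. specialize (H p Hp). lra. Qed.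

Lemma near_0_eq (y z : state) : near 0 y z -> y = z.
Proof.
  intro H. apply nearP in H. destruct H as (HS & HI & HR).
  destruct y as [[s i] r], z as [[s' i'] r']. unfold pS, pI, pR in *; simpl in *.
  pose proof (Rabs_pos (s - s')). pose proof (Rabs_pos (i - i')). pose proof (Rabs_pos (r - r')).
  assert (s = s') by (apply Rminus_diag_uniq, Rabs_eq_0; lra).
  assert (i = i') by (apply Rminus_diag_uniq, Rabs_eq_0; lra).
  assert (r = r') by (apply Rminus_diag_uniq, Rabs_eq_0; lra).
  subst. reflexivity.
Qed.

Definition lipschitz (F : state -> state) (L : R) : Prop :=
  forall d y z, near d y z -> near (L * d) (F y) (F z).

Definition coord_bounded (F : state -> state) (B : R) : Prop :=
  forall y p, coord p -> Rabs (p (F y)) <= B.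

Lemma locally_near (g : R -> state) (t e : R) : 0 < e ->
  (forall q, coord q -> continuous (fun s => q (g s)) t) ->
  locally t (fun v => near e (g v) (g t)).
Proof.
  intros He Hg.
  assert (Hq : forall q, coord q -> locally t (fun v => Rabs (q (g v) - q (g t)) < e)).
  { intros q Hcq. exact (proj1 (filterlim_locally _ _) (Hg q Hcq) (mkposreal e He)). }
  generalize (@filter_and _ (locally t) _ _ _ (Hq pS ltac:(left; auto))
    (@filter_and _ (locally t) _ _ _ (Hq pI ltac:(right; left; auto))
                                    (Hq pR ltac:(right; right; auto)))).
  apply filter_imp. intros v (HS & HI & HR). apply nearP. lra.
Qed.

Lemma lipschitz_margin (L eps : R) : 0 <= L -> 0 < eps -> exists e, 0 < e /\ L * e < eps.
Proof.
  intros HL Heps. exists (eps / (L + 1)). split; [apply Rdiv_lt_0_compat; lra|].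
  apply Rmult_lt_reg_r with (L + 1); [lra|]. field_simplify; [|lra]. nra.
Qed.

Lemma continuous_lipschitz_comp (F : state -> state) (L : R) (g : R -> state) (t : R) :
  0 <= L -> lipschitz F L -> (forall q, coord q -> continuous (fun s => q (g s)) t) ->
  forall p, coord p -> continuous (fun s => p (F (g s))) t.
Proof.
  intros HL0 HL Hg p Hp. apply filterlim_locally. intros eps.
  destruct (lipschitz_margin L eps HL0 (cond_pos eps)) as [e [He HLe]].
  generalize (locally_near g t e He Hg). apply filter_imp. intros v Hv.
  specialize (HL _ _ _ Hv p Hp). change (Rabs (p (F (g v)) - p (F (g t))) < eps). lra.
Qed.

Lemma bounded_nonneg (F : state -> state) (B : R) : coord_bounded F B -> 0 <= B.
Proof. intro HB. eapply Rle_trans; [apply Rabs_pos|]. apply (HB (0, 0, 0) pS). left; reflexivity. Qed.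

Lemma sol_onI (F : state -> state) (x : R -> state) (T : R) :
  (forall t p, 0 < t < T -> coord p -> is_derive (fun u => p (x u)) t (p (F (x t)))) ->
  (forall p, coord p -> right_cont0 (fun u => p (x u))) -> sol_on F x T.
Proof.
  intros Hder Hrc. split; [intros t Ht; repeat split; apply Hder; unfold coord; auto|].
  repeat split; apply Hrc; unfold coord; auto.
Qed.

Lemma sol_on_derive (F : state -> state) (x : R -> state) (T : R) : sol_on F x T ->
  forall t p, 0 < t < T -> coord p -> is_derive (fun u => p (x u)) t (p (F (x t))).
Proof. intros [Hder _] t p Ht [-> | [-> | ->]]; apply Hder, Ht. Qed.

Lemma sol_on_right_cont0 (F : state -> state) (x : R -> state) (T : R) : sol_on F x T ->
  forall p, coord p -> right_cont0 (fun u => p (x u)).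
Proof. intros (_ & HS & HI & HR) p [-> | [-> | ->]]; assumption. Qed.

(** * Existence of solutions by Picard iteration *)

Lemma is_derive_add_RInt (c : R) (g : R -> R) : (forall s, continuous g s) ->
  forall t, is_derive (fun u => c + RInt g 0 u) t (g t).
Proof.
  intros Hg t.
  assert (HI : is_derive (fun u => RInt g 0 u) t (g t)).
  { apply (is_derive_RInt g (fun u => RInt g 0 u) 0 t); [|apply Hg].
    apply filter_forall. intro b. apply (RInt_correct g 0 b), ex_RInt_continuous. intros z _. apply Hg. }
  eapply is_derive_val; [apply is_derive_Rplus; [apply is_derive_Rconst|exact HI]|ring].
Qed.

Definition exp_term (q : R) (k : nat) : R := / INR (Factorial.fact k) * q ^ k.

Lemma ex_series_exp_term (q : R) : ex_series (exp_term q).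
Proof. destruct (exist_exp q) as [l Hl]. apply ex_series_Reals_1. exists l. exact Hl. Qed.

Lemma exp_term_nonneg (q : R) (k : nat) : 0 <= q -> 0 <= exp_term q k.
Proof.
  intro Hq. apply Rmult_le_pos; [|apply pow_le; exact Hq].
  left. apply Rinv_0_lt_compat, INR_fact_lt_0.
Qed.

Section Picard.

Variables (F : state -> state) (L B : R) (y0 : state).
Hypotheses (HL0 : 0 <= L) (HL : lipschitz F L) (HB : coord_bounded F B).

Fixpoint picard (n : nat) (t : R) : state :=
  match n with
  | O => y0
  | S k => (pS y0 + RInt (fun s => pS (F (picard k s))) 0 t,
            pI y0 + RInt (fun s => pI (F (picard k s))) 0 t,
            pR y0 + RInt (fun s => pR (F (picard k s))) 0 t)
  end.

Lemma picard_coord (n : nat) (t : R) (p : state -> R) : coord p ->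
  p (picard (S n) t) = p y0 + RInt (fun s => p (F (picard n s))) 0 t.
Proof. intros [-> | [-> | ->]]; reflexivity. Qed.

Lemma is_derive_picard_of_continuous (n : nat) :
  (forall t q, coord q -> continuous (fun s => q (picard n s)) t) ->
  forall t p, coord p -> is_derive (fun s => p (picard (S n) s)) t (p (F (picard n t))).
Proof.
  intros Hc t p Hp.
  apply (is_derive_ext (fun s => p y0 + RInt (fun u => p (F (picard n u))) 0 s)).
  - intro s. symmetry. apply picard_coord, Hp.
  - apply is_derive_add_RInt. intro s. apply (continuous_lipschitz_comp F L); auto.
Qed.

Lemma picard_continuous (n : nat) (t : R) (p : state -> R) : coord p ->
  continuous (fun s => p (picard n s)) t.
Proof.
  revert t p. induction n as [|n IH]; intros t p Hp; [apply continuous_const|].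
  apply (continuous_of_is_derive _ _ (p (F (picard n t)))).
  apply is_derive_picard_of_continuous; auto.
Qed.

Lemma is_derive_picard (n : nat) (t : R) (p : state -> R) : coord p ->
  is_derive (fun s => p (picard (S n) s)) t (p (F (picard n t))).
Proof. apply is_derive_picard_of_continuous. intros. apply picard_continuous. assumption. Qed.

Lemma picard_at0 (n : nat) : picard n 0 = y0.
Proof.
  destruct n as [|n]; [reflexivity|]. apply near_0_eq. intros p Hp.
  rewrite picard_coord, RInt_point by exact Hp. change (Rabs (p y0 + 0 - p y0) <= 0).
  rewrite Rplus_0_r, Rminus_eq_0, Rabs_R0. apply Rle_refl.
Qed.

Lemma near_picard_y0 (n : nat) (t : R) : 0 <= t -> near (B * t) (picard n t) y0.
Proof.
  intro Ht. pose proof (bounded_nonneg F B HB) as HB0.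
  destruct n as [|n]; [apply near_refl; nra|]. intros p Hp.
  rewrite <- (picard_at0 (S n)).
  replace (B * t) with (B * t - B * 0) by ring.
  apply (abs_sub_le_of_derive (fun s => p (picard (S n) s)) (fun s => p (F (picard n s)))
           (fun u => B * u) (fun _ => B)); auto.
  - intro s. apply is_derive_picard, Hp.
  - intro s. eapply is_derive_val; [apply is_derive_scal, is_derive_Rid|ring].
Qed.

Lemma near_picard_step (n : nat) (t : R) : 0 <= t ->
  near (B * L ^ n * t ^ S n / INR (Factorial.fact (S n))) (picard (S n) t) (picard n t).
Proof.
  revert t. induction n as [|n IH]; intros t Ht.
  - eapply near_le; [|apply near_picard_y0, Ht]. simpl. lra.
  - intros p Hp.
    set (K := B * L ^ S n / INR (Factorial.fact (S (S n)))).
    assert (Hfact : INR (Factorial.fact (S (S n))) = INR (S (S n)) * INR (Factorial.fact (S n)))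
      by (rewrite fact_simpl, mult_INR; reflexivity).
    assert (Hn : INR (S (S n)) <> 0) by (apply not_0_INR; lia).
    pose proof (INR_fact_neq_0 (S n)).
    assert (Hbound := abs_sub_le_of_derive
      (fun s => p (picard (S (S n)) s) - p (picard (S n) s))
      (fun s => p (F (picard (S n) s)) - p (F (picard n s)))
      (fun u => K * u ^ S (S n)) (fun u => L * (B * L ^ n * u ^ S n / INR (Factorial.fact (S n)))) t Ht).
    cbv beta in Hbound. rewrite !picard_at0, pow_i, Rmult_0_r, Rminus_0_r, Rminus_eq_0, Rminus_0_r
      in Hbound by lia.
    replace (B * L ^ S n * t ^ S (S n) / INR (Factorial.fact (S (S n)))) with (K * t ^ S (S n))
      by (unfold K; field; apply INR_fact_neq_0).
    apply Hbound.
    + intro s. apply is_derive_Rminus; apply is_derive_picard, Hp.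
    + intro s. eapply is_derive_val; [apply is_derive_scal, is_derive_pow, is_derive_Rid|].
      unfold K. rewrite Hfact. simpl pred. simpl pow. field. split; auto.
    + intros s Hs. apply (HL _ _ _ (IH s ltac:(lra)) p Hp).
Qed.

Lemma picard_gap_le_exp_term (n : nat) (t T : R) : 0 <= t <= T ->
  B * L ^ n * t ^ S n / INR (Factorial.fact (S n)) <= B * T * exp_term (L * T) n.
Proof.
  intro Ht. pose proof (bounded_nonneg F B HB) as HB0.
  pose proof (INR_fact_neq_0 n).
  assert (Hn : 1 <= INR (S n)) by (rewrite S_INR; pose proof (pos_INR n); lra).
  assert (Hterm : 0 <= B * T * exp_term (L * T) n).
  { apply Rmult_le_pos; [apply Rmult_le_pos; lra|apply exp_term_nonneg; apply Rmult_le_pos; lra]. }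
  apply Rle_trans with (B * L ^ n * T ^ S n / INR (Factorial.fact (S n))).
  - apply Rmult_le_compat_r; [left; apply Rinv_0_lt_compat, INR_fact_lt_0|].
    apply Rmult_le_compat_l; [apply Rmult_le_pos; [lra|apply pow_le; lra]|apply pow_incr; lra].
  - replace (B * L ^ n * T ^ S n / INR (Factorial.fact (S n)))
      with (B * T * exp_term (L * T) n / INR (S n))
      by (unfold exp_term; rewrite fact_simpl, mult_INR, Rpow_mult_distr, <- tech_pow_Rmult;
          field; split; [auto|apply not_0_INR; lia]).
    apply Rmult_le_reg_r with (INR (S n)); [lra|].
    unfold Rdiv. rewrite Rmult_assoc, Rinv_l by lra. nra.
Qed.

Lemma near_picard_tail (T : R) (n k : nat) (t : R) : 0 <= t <= T ->
  near (B * T * sum_n_m (exp_term (L * T)) n (n + k)) (picard (S (n + k)) t) (picard n t).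
Proof.
  intro Ht. induction k as [|k IH].
  - rewrite Nat.add_0_r, sum_n_n. eapply near_le; [|apply near_picard_step; lra].
    apply picard_gap_le_exp_term, Ht.
  - rewrite Nat.add_succ_r, sum_n_Sm by lia.
    change (plus ?a ?b) with (a + b). rewrite Rmult_plus_distr_l, Rplus_comm.
    apply (near_trans _ _ _ (picard (S (n + k)) t)); [|exact IH].
    eapply near_le; [|apply near_picard_step; lra]. apply picard_gap_le_exp_term, Ht.
Qed.

Lemma picard_uniform_cauchy (T : R) : 0 <= T -> forall eps, 0 < eps ->
  exists N, forall n m t, 0 <= t <= T -> (N <= n)%nat -> (N <= m)%nat ->
    near eps (picard n t) (picard m t).
Proof.
  intros HT eps Heps. pose proof (bounded_nonneg F B HB) as HB0.
  set (e := eps / (B * T + 1)).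
  assert (He : 0 < e) by (apply Rdiv_lt_0_compat; nra).
  assert (HBTe : B * T * e <= eps).
  { apply Rmult_le_reg_r with (B * T + 1); [nra|]. unfold e. field_simplify; nra. }
  destruct (Cauchy_ex_series _ (ex_series_exp_term (L * T)) (mkposreal e He)) as [N HN].
  assert (Hlt : forall n m t, 0 <= t <= T -> (N <= n)%nat -> (n < m)%nat ->
            near eps (picard m t) (picard n t)).
  { intros n m t Ht Hn Hnm. replace m with (S (n + (m - n - 1))) by lia.
    eapply near_le; [|apply near_picard_tail, Ht].
    specialize (HN n (n + (m - n - 1))%nat Hn ltac:(lia)).
    change (Rabs (sum_n_m (exp_term (L * T)) n (n + (m - n - 1))) < e) in HN.
    pose proof (Rle_abs (sum_n_m (exp_term (L * T)) n (n + (m - n - 1)))).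
    apply Rle_trans with (B * T * e); [apply Rmult_le_compat_l; nra|exact HBTe]. }
  exists N. intros n m t Ht Hn Hm.
  destruct (Nat.lt_trichotomy n m) as [Hnm|[->|Hmn]].
  - apply near_sym, (Hlt n m); auto.
  - apply near_refl. lra.
  - apply (Hlt m n); auto.
Qed.

Definition picard_limit (t : R) : state :=
  (real (Lim_seq (fun n => pS (picard n t))),
   real (Lim_seq (fun n => pI (picard n t))),
   real (Lim_seq (fun n => pR (picard n t)))).

Lemma picard_limit_coord (t : R) (p : state -> R) : coord p ->
  p (picard_limit t) = real (Lim_seq (fun n => p (picard n t))).
Proof. intros [-> | [-> | ->]]; reflexivity. Qed.

Lemma is_lim_seq_picard (t : R) (p : state -> R) : 0 <= t -> coord p ->
  is_lim_seq (fun n => p (picard n t)) (p (picard_limit t)).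
Proof.
  intros Ht Hp. rewrite picard_limit_coord by exact Hp.
  assert (Hex : ex_finite_lim_seq (fun n => p (picard n t))).
  { apply ex_lim_seq_cauchy_corr. intros eps.
    destruct (picard_uniform_cauchy t Ht (eps / 2)) as [N HN]; [pose proof (cond_pos eps); lra|].
    exists N. intros n m Hn Hm. eapply Rle_lt_trans; [apply (HN n m t); auto; lra|].
    pose proof (cond_pos eps); lra. }
  destruct Hex as [l Hl]. rewrite (is_lim_seq_unique _ _ Hl). exact Hl.
Qed.

Lemma near_picard_limit (t e : R) : 0 <= t -> 0 < e ->
  exists N, forall n, (N <= n)%nat -> near e (picard n t) (picard_limit t).
Proof.
  intros Ht He. destruct (picard_uniform_cauchy t Ht e He) as [N HN].
  exists N. intros n Hn p Hp. rewrite Rabs_minus_sym.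
  apply (abs_sub_lim_le (fun m => p (picard m t)) _ _ _ N (is_lim_seq_picard t p Ht Hp)).
  intros m Hm. rewrite Rabs_minus_sym. apply (HN n m t); auto. lra.
Qed.

Lemma near_picard_limit_y0 (t : R) : 0 <= t -> near (B * t) (picard_limit t) y0.
Proof.
  intros Ht p Hp. apply (abs_sub_lim_le (fun m => p (picard m t)) _ _ _ 0 (is_lim_seq_picard t p Ht Hp)).
  intros m _. apply near_picard_y0; assumption.
Qed.

Lemma Derive_picard (k : nat) (s : R) (p : state -> R) : coord p ->
  Derive (fun u => p (picard (S k) u)) s = p (F (picard k s)).
Proof. intro Hp. apply is_derive_unique, is_derive_picard, Hp. Qed.

Lemma CVU_dom_picard (T : R) (p : state -> R) : 0 <= T -> coord p ->
  CVU_dom (fun n s => p (picard n s)) (fun s => 0 < s < T).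
Proof.
  intros HT Hp. apply CVU_dom_cauchy. intros eps. pose proof (cond_pos eps).
  destruct (picard_uniform_cauchy T HT (eps / 2)) as [N HN]; [lra|].
  exists N. intros n m s Hs Hn Hm.
  eapply Rle_lt_trans; [apply (HN n m s); auto; lra|lra].
Qed.

Lemma CVU_dom_Derive_picard (T : R) (p : state -> R) : 0 <= T -> coord p ->
  CVU_dom (fun n s => Derive (fun u => p (picard n u)) s) (fun s => 0 < s < T).
Proof.
  intros HT Hp. apply CVU_dom_cauchy. intros eps.
  destruct (lipschitz_margin L eps HL0 (cond_pos eps)) as [e [He HLe]].
  destruct (picard_uniform_cauchy T HT e He) as [N HN].
  exists (S N). intros [|n] [|m] s Hs Hn Hm; try lia.
  rewrite !Derive_picard by exact Hp. eapply Rle_lt_trans; [|exact HLe].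
  apply (HL _ _ _ (HN n m s ltac:(lra) ltac:(lia) ltac:(lia)) p Hp).
Qed.

Lemma is_lim_seq_F_picard (t : R) (p : state -> R) : 0 <= t -> coord p ->
  is_lim_seq (fun n => p (F (picard n t))) (p (F (picard_limit t))).
Proof.
  intros Ht Hp. apply is_lim_seq_spec. intros eps.
  destruct (lipschitz_margin L eps HL0 (cond_pos eps)) as [e [He HLe]].
  destruct (near_picard_limit t e Ht He) as [N HN]. exists N. intros n Hn.
  eapply Rle_lt_trans; [apply (HL _ _ _ (HN n Hn) p Hp)|exact HLe].
Qed.

Lemma is_derive_picard_limit (t : R) (p : state -> R) : 0 < t -> coord p ->
  is_derive (fun u => p (picard_limit u)) t (p (F (picard_limit t))).
Proof.
  intros Ht Hp.
  assert (Hlim := CVU_Derive (fun n s => p (picard n s)) (fun s => 0 < s < t + 1)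
    (open_and _ _ (open_gt 0) (open_lt (t + 1))) ltac:(intros a b x Ha Hb Hx; lra)
    (CVU_dom_picard (t + 1) p ltac:(lra) Hp)).
  eapply is_derive_ext; [|eapply is_derive_val; [apply Hlim|]].
  - intro u. symmetry. apply picard_limit_coord, Hp.
  - intros [|k] s _; [exists 0; exact (is_derive_Rconst (p y0) s)|].
    eexists. apply is_derive_picard, Hp.
  - intros [|k] s _.
    + apply continuity_pt_ext with (fun _ => 0); [intro u; symmetry; exact (Derive_const (p y0) u)|].
      apply continuity_pt_const. intros a b; reflexivity.
    + apply continuity_pt_ext with (fun u => p (F (picard k u))).
      * intro u. symmetry. apply Derive_picard, Hp.
      * apply continuity_pt_filterlim, (continuous_lipschitz_comp F L); auto.
        intros q Hq. apply picard_continuous, Hq.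
  - apply CVU_dom_Derive_picard; [lra|exact Hp].
  - lra.
  - rewrite <- Lim_seq_incr_1.
    rewrite (Lim_seq_ext _ (fun n => p (F (picard n t)))) by (intro; apply Derive_picard, Hp).
    rewrite (is_lim_seq_unique _ _ (is_lim_seq_F_picard t p ltac:(lra) Hp)). reflexivity.
Qed.

Theorem picard_limit_solution : picard_limit 0 = y0 /\ sol_global F picard_limit.
Proof.
  pose proof (bounded_nonneg F B HB) as HB0.
  assert (H0 : picard_limit 0 = y0).
  { apply near_0_eq. replace 0 with (B * 0) at 1 by ring. apply near_picard_limit_y0, Rle_refl. }
  split; [exact H0|]. intros T HT. apply sol_onI.
  - intros t p Ht Hp. apply is_derive_picard_limit; [lra|exact Hp].
  - intros p Hp. apply (right_cont0_of_le _ B HB0). intros u Hu.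
    rewrite H0. apply near_picard_limit_y0; [lra|exact Hp].
Qed.

End Picard.

(** * The SIRW vector field *)

(* Composing with [clamp_state] makes the polynomial field globally Lipschitz and
   bounded, without changing it on the box [-2, 2]^3. *)
Definition clamp (v : R) : R := Rmax (-2) (Rmin 2 v).

Definition clamp_state (y : state) : state := (clamp (pS y), clamp (pI y), clamp (pR y)).

Definition in_box (y : state) : Prop := forall p, coord p -> Rabs (p y) <= 2.

Lemma in_boxP (y : state) : in_box y <-> Rabs (pS y) <= 2 /\ Rabs (pI y) <= 2 /\ Rabs (pR y) <= 2.
Proof.
  split; [intro H; repeat split; apply H; unfold coord; auto|].
  intros (HS & HI & HR) p [-> | [-> | ->]]; assumption.
Qed.

Lemma clamp_coord (p : state -> R) (y : state) : coord p -> p (clamp_state y) = clamp (p y).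
Proof. intros [-> | [-> | ->]]; reflexivity. Qed.

Lemma clamp_state_in_box (y : state) : in_box (clamp_state y).
Proof.
  intros p Hp. rewrite clamp_coord by exact Hp. apply Rabs_le.
  unfold clamp, Rmax, Rmin. repeat destruct Rle_dec; lra.
Qed.

Lemma near_clamp_state (d : R) (y z : state) : near d y z -> near d (clamp_state y) (clamp_state z).
Proof.
  intros H p Hp. rewrite !clamp_coord by exact Hp. eapply Rle_trans; [|exact (H p Hp)].
  apply Rabs_le. pose proof (Rle_abs (p y - p z)). pose proof (Rle_abs (- (p y - p z))).
  rewrite Rabs_Ropp in *. unfold clamp, Rmax, Rmin. repeat destruct Rle_dec; lra.
Qed.

Lemma clamp_state_id (y : state) : in_box y -> clamp_state y = y.
Proof.
  intro Hy. apply near_0_eq. intros p Hp. rewrite clamp_coord by exact Hp.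
  specialize (Hy p Hp). apply Rabs_le_between in Hy.
  replace (clamp (p y)) with (p y) by (unfold clamp, Rmax, Rmin; repeat destruct Rle_dec; lra).
  rewrite Rminus_eq_0, Rabs_R0. apply Rle_refl.
Qed.

Lemma lipschitz_clamp_comp (F : state -> state) (L : R) :
  (forall d y z, in_box y -> in_box z -> near d y z -> near (L * d) (F y) (F z)) ->
  lipschitz (fun y => F (clamp_state y)) L.
Proof.
  intros HF d y z Hyz. apply HF; [apply clamp_state_in_box..|apply near_clamp_state, Hyz].
Qed.

Lemma bounded_clamp_comp (F : state -> state) (B : R) :
  (forall y, in_box y -> forall p, coord p -> Rabs (p (F y)) <= B) ->
  coord_bounded (fun y => F (clamp_state y)) B.
Proof. intros HF y. apply HF, clamp_state_in_box. Qed.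

Lemma scale_bounds (k x X : R) : 0 <= k -> -X <= x <= X -> -(k * X) <= k * x <= k * X.
Proof. intros Hk Hx. split; nra. Qed.

Lemma product_diff_bounds (a b a' b' d : R) : Rabs a <= 2 -> Rabs b' <= 2 ->
  Rabs (a - a') <= d -> Rabs (b - b') <= d -> -(4 * d) <= a * b - a' * b' <= 4 * d.
Proof.
  intros Ha Hb' Ha' Hb. apply Rabs_le_between in Ha, Hb', Ha', Hb.
  replace (a * b - a' * b') with (a * (b - b') + b' * (a - a')) by ring. split; nra.
Qed.

Lemma near_E0P (e : R) (y : state) :
  near e y (1, 0, 0) <-> Rabs (pS y - 1) <= e /\ Rabs (pI y) <= e /\ Rabs (pR y) <= e.
Proof.
  rewrite nearP. change (pS (1, 0, 0)) with 1. change (pI (1, 0, 0)) with 0.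
  change (pR (1, 0, 0)) with 0. rewrite !Rminus_0_r. reflexivity.
Qed.

Section Field.

Variables (alpha beta gamma eta rho : R).
Hypotheses (Halpha : 0 < alpha) (Hbeta : 0 < beta) (Hgamma : 0 < gamma) (Heta : 0 < eta)
  (Hrho : 0 < rho < 1).

Let F := sirw_field alpha beta gamma eta rho.

Lemma sirw_field_lipschitz_on_box (d : R) (y z : state) : in_box y -> in_box z -> near d y z ->
  near (13 * (alpha + beta + gamma + eta) * d) (F y) (F z).
Proof.
  destruct y as [[s i] r], z as [[s' i'] r']. intros Hy Hz Hd.
  apply in_boxP in Hy, Hz. apply nearP in Hd.
  unfold F, sirw_field, pS, pI, pR in *; simpl in *.
  destruct Hy as (Bs & Bi & Br), Hz as (Bs' & Bi' & Br'), Hd as (Ds & Di & Dr).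
  pose proof (product_diff_bounds i s i' s' d Bi Bs' Di Ds) as Pis.
  pose proof (product_diff_bounds i i i' i' d Bi Bi' Di Di) as Pii.
  pose proof (product_diff_bounds i r i' r' d Bi Br' Di Dr) as Pir.
  assert (H1rho : 0 <= (1 - rho) * beta) by nra.
  assert (Hd0 : 0 <= d) by (pose proof (Rabs_pos (s - s')); lra).
  assert (0 <= rho * beta * d) by (apply Rmult_le_pos; [apply Rmult_le_pos|]; lra).
  pose proof (scale_bounds _ _ _ H1rho Pis).
  pose proof (scale_bounds beta _ _ ltac:(lra) Pis).
  pose proof (scale_bounds beta _ _ ltac:(lra) Pii).
  pose proof (scale_bounds beta _ _ ltac:(lra) Pir).
  apply Rabs_le_between in Ds, Di, Dr.
  pose proof (scale_bounds alpha _ _ ltac:(lra) Di). pose proof (scale_bounds beta _ _ ltac:(lra) Di).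
  pose proof (scale_bounds gamma _ _ ltac:(lra) Ds). pose proof (scale_bounds gamma _ _ ltac:(lra) Di).
  pose proof (scale_bounds gamma _ _ ltac:(lra) Dr). pose proof (scale_bounds eta _ _ ltac:(lra) Dr).
  apply nearP; unfold pS, pI, pR; simpl; repeat split; apply Rabs_le; split; nra.
Qed.

Lemma sirw_field_bounded_on_box (y : state) : in_box y ->
  forall p, coord p -> Rabs (p (F y)) <= 27 * (alpha + beta + gamma + eta).
Proof.
  intros Hy p Hp. replace (p (F y)) with (p (F y) - p (F (0, 0, 0)) + p (F (0, 0, 0))) by ring.
  eapply Rle_trans; [apply Rabs_triang|].
  assert (H0 : in_box (0, 0, 0)) by (apply in_boxP; unfold pS, pI, pR; simpl; rewrite Rabs_R0; lra).
  assert (Hnear : near 2 y (0, 0, 0)).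
  { apply in_boxP in Hy. apply nearP. unfold pS, pI, pR in *; simpl. rewrite !Rminus_0_r. exact Hy. }
  pose proof (sirw_field_lipschitz_on_box 2 y (0, 0, 0) Hy H0 Hnear p Hp).
  assert (Rabs (p (F (0, 0, 0))) <= gamma).
  { destruct Hp as [-> | [-> | ->]]; unfold F, sirw_field, pS, pI, pR; simpl;
      apply Rabs_le; split; lra. }
  lra.
Qed.

Lemma sirw_disease_free_equilibria (s i r : R) : i = 0 ->
  is_equilibrium F (s, i, r) <-> (s, i, r) = (1, 0, 0).
Proof.
  intros ->. unfold is_equilibrium, F, sirw_field, pS, pI, pR; simpl. split.
  - intros [= HS _ HR].
    assert (r = 0) by nra. subst r. assert (s = 1) by nra. subst s. reflexivity.
  - intros [= -> ->]. f_equal; [f_equal|]; ring.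
Qed.

Lemma truncated_sirw_field_global_solution (y0 : state) :
  exists x : R -> state, x 0 = y0 /\ sol_global (fun y => F (clamp_state y)) x.
Proof.
  set (S := alpha + beta + gamma + eta).
  destruct (picard_limit_solution (fun y => F (clamp_state y)) (13 * S) (27 * S) y0)
    as [Hx0 Hsol].
  - unfold S. lra.
  - apply lipschitz_clamp_comp, sirw_field_lipschitz_on_box.
  - apply bounded_clamp_comp, sirw_field_bounded_on_box.
  - eexists. split; [exact Hx0|exact Hsol].
Qed.

Definition growth (y : state) : R := rho * beta * pS y - alpha + beta * (1 - pS y - pI y - pR y).

Lemma sirw_field_pI (y : state) : pI (F y) = pI y * growth y.
Proof. unfold F, sirw_field, growth, pS, pI, pR. simpl. ring. Qed.

Lemma growth_near_E0 (e : R) (y : state) : near e y (1, 0, 0) ->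
  Rabs (growth y - (rho * beta - alpha)) <= 3 * beta * e.
Proof.
  intro Hy. apply near_E0P in Hy. destruct Hy as (HS & HI & HR).
  replace (growth y - (rho * beta - alpha))
    with ((1 - rho) * beta * (- (pS y - 1)) + beta * (- pI y) + beta * (- pR y))
    by (unfold growth; ring).
  apply Rabs_le_between in HS, HI, HR.
  assert (Hk : 0 <= (1 - rho) * beta <= beta) by (split; nra).
  pose proof (scale_bounds ((1 - rho) * beta) (- (pS y - 1)) e ltac:(lra) ltac:(lra)).
  pose proof (scale_bounds beta (- pI y) e ltac:(lra) ltac:(lra)).
  pose proof (scale_bounds beta (- pR y) e ltac:(lra) ltac:(lra)).
  assert ((1 - rho) * beta * e <= beta * e) by (apply Rmult_le_compat_r; lra).
  apply Rabs_le. split; lra.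
Qed.

End Field.

(* The [- 0] make [dist3 y (1, 0, 0)] convertible to [sqrt (sqdist_E0 y)]. *)
Definition sqdist_E0 (y : state) : R := (pS y - 1) ^ 2 + (pI y - 0) ^ 2 + (pR y - 0) ^ 2.

Lemma sqdist_E0_nonneg (y : state) : 0 <= sqdist_E0 y.
Proof.
  unfold sqdist_E0. pose proof (pow2_ge_0 (pS y - 1)). pose proof (pow2_ge_0 (pI y - 0)).
  pose proof (pow2_ge_0 (pR y - 0)). lra.
Qed.

Lemma dist3_E0_lt (y : state) (d : R) : 0 < d -> dist3 y (1, 0, 0) < d <-> sqdist_E0 y < d * d.
Proof.
  intro Hd. change (dist3 y (1, 0, 0)) with (sqrt (sqdist_E0 y)).
  pose proof (sqdist_E0_nonneg y) as H0. split.
  - intro Hlt. pose proof (sqrt_sqrt (sqdist_E0 y) H0). pose proof (sqrt_pos (sqdist_E0 y)). nra.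
  - intro Hlt. rewrite <- (sqrt_square d) by lra. apply sqrt_lt_1_alt. lra.
Qed.

Lemma near_of_sqdist_E0_lt (y : state) (e : R) : 0 < e -> sqdist_E0 y < e * e -> near e y (1, 0, 0).
Proof.
  intros He Hy. unfold sqdist_E0 in Hy.
  assert (Hsq : forall v, v ^ 2 < e * e -> Rabs v <= e).
  { intros v Hv. rewrite <- (Rabs_pos_eq e) by lra. apply Rsqr_le_abs_0. unfold Rsqr. nra. }
  pose proof (pow2_ge_0 (pS y - 1)). pose proof (pow2_ge_0 (pI y - 0)).
  pose proof (pow2_ge_0 (pR y - 0)).
  apply near_E0P. rewrite <- (Rminus_0_r (pI y)), <- (Rminus_0_r (pR y)).
  repeat split; apply Hsq; lra.
Qed.

Lemma filterlim_dist3_E0_of_decay (x : R -> state) (C c : R) : 0 < c ->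
  (forall t, 0 <= t -> sqdist_E0 (x t) * (1 + c * t) <= C) ->
  filterlim (fun t => dist3 (x t) (1, 0, 0)) (Rbar_locally p_infty) (locally 0).
Proof.
  intros Hc Hdecay. apply filterlim_locally. intros eps.
  pose proof (cond_pos eps) as Heps.
  assert (Hceps : 0 < c * (eps * eps)) by (apply Rmult_lt_0_compat; [lra|nra]).
  pose proof (Hdecay 0 (Rle_refl 0)) as HC0. pose proof (sqdist_E0_nonneg (x 0)).
  exists (C / (c * (eps * eps))). intros t Ht.
  assert (Ht0 : 0 <= t).
  { eapply Rle_trans; [|left; exact Ht]. apply Rdiv_le_0_compat; lra. }
  assert (Hct : C < c * t * (eps * eps)).
  { apply Rmult_lt_compat_r with (r := c * (eps * eps)) in Ht; [|exact Hceps].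
    replace (C / (c * (eps * eps)) * (c * (eps * eps))) with C in Ht by (field; lra). lra. }
  change (Rabs (dist3 (x t) (1, 0, 0) - 0) < eps).
  rewrite Rminus_0_r, Rabs_pos_eq by apply sqrt_pos.
  apply dist3_E0_lt; [exact Heps|].
  pose proof (Hdecay t Ht0). pose proof (sqdist_E0_nonneg (x t)).
  apply Rnot_le_lt. intro Hge.
  assert (eps * eps * (c * t) <= sqdist_E0 (x t) * (c * t))
    by (apply Rmult_le_compat_r; [apply Rmult_le_pos|]; lra).
  lra.
Qed.

(** * Stability for R0 < 1 *)

Lemma two_mul_le_sq (m x y g : R) : 0 < g -> 2 * m * x * y <= g * x ^ 2 + m ^ 2 / g * y ^ 2.
Proof.
  intro Hg. replace (g * x ^ 2 + m ^ 2 / g * y ^ 2) with ((g * x - m * y) ^ 2 / g + 2 * m * x * y)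
    by (field; lra).
  assert (0 <= (g * x - m * y) ^ 2 / g) by (apply Rdiv_le_0_compat; [apply pow2_ge_0|lra]).
  lra.
Qed.

Definition lyap (K : R) (y : state) : R := (pS y + pR y - 1) ^ 2 + pR y ^ 2 + K * pI y ^ 2.

Definition lyap_rate (K : R) (F : state -> state) (y : state) : R :=
  2 * (pS y + pR y - 1) * (pS (F y) + pR (F y)) + 2 * pR y * pR (F y) + 2 * K * pI y * pI (F y).

Lemma lyap_nonneg (K : R) (y : state) : 0 <= K -> 0 <= lyap K y.
Proof.
  intro HK. unfold lyap. pose proof (pow2_ge_0 (pS y + pR y - 1)). pose proof (pow2_ge_0 (pR y)).
  pose proof (pow2_ge_0 (pI y)). nra.
Qed.

Lemma sqdist_E0_le_lyap (K : R) (y : state) : 1 <= K -> sqdist_E0 y <= 3 * lyap K y.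
Proof.
  intro HK. unfold sqdist_E0, lyap.
  pose proof (pow2_ge_0 (pS y + pR y - 1)). pose proof (pow2_ge_0 (pS y + 2 * pR y - 1)).
  assert (0 <= (3 * K - 1) * pI y ^ 2) by (apply Rmult_le_pos; [lra|apply pow2_ge_0]).
  lra.
Qed.

Lemma lyap_le_sqdist_E0 (K : R) (y : state) : 1 <= K -> lyap K y <= (K + 3) * sqdist_E0 y.
Proof.
  intro HK. unfold sqdist_E0, lyap.
  pose proof (pow2_ge_0 (pS y - 1 - pR y)). pose proof (pow2_ge_0 (pS y - 1)).
  pose proof (pow2_ge_0 (pR y)).
  pose proof (pow2_ge_0 (pI y)).
  assert (0 <= (K - 1) * (pS y - 1) ^ 2) by (apply Rmult_le_pos; [lra|apply pow2_ge_0]).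
  assert (0 <= (K - 1) * pR y ^ 2) by (apply Rmult_le_pos; [lra|apply pow2_ge_0]).
  lra.
Qed.

Lemma is_derive_lyap_along (K : R) (F : state -> state) (x : R -> state) (t : R) :
  (forall p, coord p -> is_derive (fun u => p (x u)) t (p (F (x t)))) ->
  is_derive (fun u => lyap K (x u)) t (lyap_rate K F (x t)).
Proof.
  intro Hx.
  pose proof (Hx pS ltac:(left; auto)) as HS. pose proof (Hx pI ltac:(right; left; auto)) as HI.
  pose proof (Hx pR ltac:(right; right; auto)) as HR.
  unfold lyap, lyap_rate. eapply is_derive_val.
  - apply is_derive_Rplus; [apply is_derive_Rplus|].
    + apply is_derive_pow, is_derive_Rminus; [|apply is_derive_Rconst].
      apply is_derive_Rplus; [exact HS|exact HR].
    + apply is_derive_pow, HR.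
    + apply is_derive_scal, is_derive_pow, HI.
  - simpl. ring.
Qed.

Lemma right_cont0_lyap (K : R) (x : R -> state) :
  (forall p, coord p -> right_cont0 (fun u => p (x u))) -> right_cont0 (fun u => lyap K (x u)).
Proof.
  intro Hx.
  pose proof (Hx pS ltac:(left; auto)) as HS. pose proof (Hx pI ltac:(right; left; auto)) as HI.
  pose proof (Hx pR ltac:(right; right; auto)) as HR.
  unfold lyap. apply right_cont0_plus; [apply right_cont0_plus|].
  - apply right_cont0_pow, right_cont0_minus; [|apply right_cont0_const].
    apply right_cont0_plus; assumption.
  - apply right_cont0_pow, HR.
  - apply right_cont0_mult; [apply right_cont0_const|apply right_cont0_pow, HI].
Qed.

Section Stability.

Variables (alpha beta gamma eta rho : R).
Hypotheses (Halpha : 0 < alpha) (Hbeta : 0 < beta) (Hgamma : 0 < gamma) (Heta : 0 < eta)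
  (Hrho : 0 < rho < 1) (HR0 : rho * beta < alpha).

Let F := sirw_field alpha beta gamma eta rho.
Let c0 := alpha - rho * beta.
(* A bounds the coefficient of the cross term (S + R - 1) I when |S - 1| <= 1; M collects
   the I^2 terms that AM-GM produces from the two cross terms; K makes
   M - K c0 <= - (c0 / 2) K. *)
Let A := Rabs (alpha - gamma - beta) + beta.
Let M := A ^ 2 / gamma + alpha ^ 2 / eta.
Let K := 2 * M / c0 + 1.
Let c := Rmin gamma (Rmin eta (c0 / 2)).
Let delta := Rmin (1 / 2) (c0 / (12 * beta)).

Lemma stability_constants :
  0 < c0 /\ 0 <= M /\ 1 <= K /\ K * c0 = 2 * M + c0 /\
  0 < c /\ c <= gamma /\ c <= eta /\ c <= c0 / 2 /\
  0 < delta /\ delta <= 1 / 2 /\ 12 * beta * delta <= c0.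
Proof.
  assert (Hc0 : 0 < c0) by (unfold c0; lra).
  assert (HM : 0 <= M).
  { unfold M. apply Rplus_le_le_0_compat; apply Rdiv_le_0_compat; try apply pow2_ge_0; lra. }
  assert (HK : 1 <= K) by (unfold K; pose proof (Rdiv_le_0_compat (2 * M) c0 ltac:(lra) Hc0); lra).
  repeat split; auto.
  - unfold K. field. lra.
  - unfold c. repeat apply Rmin_glb_lt; lra.
  - apply Rmin_l.
  - unfold c. eapply Rle_trans; [apply Rmin_r|apply Rmin_l].
  - unfold c. eapply Rle_trans; [apply Rmin_r|apply Rmin_r].
  - unfold delta. apply Rmin_glb_lt; [lra|apply Rdiv_lt_0_compat; lra].
  - apply Rmin_l.
  - assert (Hd : delta <= c0 / (12 * beta)) by apply Rmin_r.
    apply Rmult_le_compat_l with (r := 12 * beta) in Hd; [|lra].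
    replace (12 * beta * (c0 / (12 * beta))) with c0 in Hd by (field; lra). exact Hd.
Qed.

Lemma lyap_rate_le (y : state) : Rabs (pS y - 1) <= 1 -> growth alpha beta rho y <= - (c0 / 2) ->
  lyap_rate K F y <= - c * lyap K y.
Proof.
  intros Hu HG.
  destruct stability_constants as (Hc0 & HM & HK & HKc0 & Hc & Hcg & Hce & Hcc0 & _).
  set (w := pS y + pR y - 1). set (u := pS y - 1) in Hu |- *. set (i := pI y). set (r := pR y).
  set (m := alpha - gamma - beta - beta * u).
  assert (Hrate : lyap_rate K F y
    = - 2 * gamma * w ^ 2 + 2 * m * w * i + 2 * alpha * r * i - 2 * eta * r ^ 2
      + 2 * K * i ^ 2 * growth alpha beta rho y).
  { unfold lyap_rate, F, sirw_field, growth, m, w, u, i, r, pS, pI, pR. simpl. ring. }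
  assert (Hm : m ^ 2 <= A ^ 2).
  { assert (Habs : Rabs m <= A).
    { unfold m, A. replace (alpha - gamma - beta - beta * u)
        with ((alpha - gamma - beta) + - (beta * u)) by ring.
      eapply Rle_trans; [apply Rabs_triang|]. rewrite Rabs_Ropp, Rabs_mult, (Rabs_pos_eq beta) by lra.
      assert (beta * Rabs u <= beta * 1) by (apply Rmult_le_compat_l; [left; exact Hbeta|exact Hu]).
      lra. }
    apply pow_maj_Rabs, Habs. }
  assert (Hwi : 2 * m * w * i <= gamma * w ^ 2 + A ^ 2 / gamma * i ^ 2).
  { eapply Rle_trans; [apply two_mul_le_sq, Hgamma|]. apply Rplus_le_compat_l.
    apply Rmult_le_compat_r; [apply pow2_ge_0|]. apply Rmult_le_compat_r; [|exact Hm].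
    left. apply Rinv_0_lt_compat, Hgamma. }
  assert (Hri : 2 * alpha * r * i <= eta * r ^ 2 + alpha ^ 2 / eta * i ^ 2)
    by (apply two_mul_le_sq, Heta).
  assert (Hgrowth : 2 * K * i ^ 2 * growth alpha beta rho y <= - (K * c0) * i ^ 2).
  { assert (0 <= 2 * K * i ^ 2) by (pose proof (pow2_ge_0 i); nra). nra. }
  assert (Hw : c * w ^ 2 <= gamma * w ^ 2) by (apply Rmult_le_compat_r; [apply pow2_ge_0|exact Hcg]).
  assert (Hr : c * r ^ 2 <= eta * r ^ 2) by (apply Rmult_le_compat_r; [apply pow2_ge_0|exact Hce]).
  assert (Hi : c * (K * i ^ 2) <= c0 / 2 * (K * i ^ 2))
    by (apply Rmult_le_compat_r; [pose proof (pow2_ge_0 i); nra|exact Hcc0]).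
  unfold lyap. fold w i r. rewrite Hrate. unfold M in HKc0. nra.
Qed.

Lemma lyap_decay (x : R -> state) (T : R) : sol_on F x T -> lyap K (x 0) < delta ^ 2 ->
  forall t, 0 <= t < T -> lyap K (x t) * (1 + c * t) <= lyap K (x 0).
Proof.
  intros Hsol H0 t Ht.
  destruct stability_constants as (Hc0 & _ & HK & _ & Hc & _ & _ & _ & Hdelta & Hdelta2 & Hdelta12).
  assert (Hsmall : forall y, lyap K y < delta ^ 2 ->
            Rabs (pS y - 1) <= 1 /\ growth alpha beta rho y <= - (c0 / 2)).
  { intros y Hy.
    assert (Hn : near (2 * delta) y (1, 0, 0)).
    { apply near_of_sqdist_E0_lt; [lra|]. pose proof (sqdist_E0_le_lyap K y HK). nra. }
    pose proof (growth_near_E0 alpha beta rho Hbeta Hrho (2 * delta) y Hn) as Hg.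
    apply near_E0P in Hn. apply Rabs_le_between' in Hg.
    assert (c0 = alpha - rho * beta) by reflexivity. lra. }
  set (psi := fun u => lyap K (x u) * (1 + c * u)).
  change (psi t <= lyap K (x 0)). replace (lyap K (x 0)) with (psi 0) by (unfold psi; ring).
  apply (barrier_le_init psi (fun u => lyap_rate K F (x u) * (1 + c * u) + lyap K (x u) * c)
           T (delta ^ 2));
    [| |unfold psi; lra| |exact Ht].
  - apply right_cont0_mult; [apply right_cont0_lyap, (sol_on_right_cont0 F x T Hsol)|].
    apply right_cont0_plus; [apply right_cont0_const|].
    apply right_cont0_mult; [apply right_cont0_const|apply right_cont0_id].
  - intros u Hu. eapply is_derive_val.
    + apply is_derive_Rmult.
      * apply is_derive_lyap_along. intros p Hp. apply (sol_on_derive F x T Hsol); assumption.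
      * apply is_derive_Rplus; [apply is_derive_Rconst|apply is_derive_scal, is_derive_Rid].
    + cbv beta. ring.
  - intros u Hu Hpsi. unfold psi in Hpsi.
    pose proof (lyap_nonneg K (x u) ltac:(lra)).
    assert (lyap K (x u) <= lyap K (x u) * (1 + c * u))
      by (pose proof (Rmult_le_pos c u ltac:(lra) ltac:(lra)); nra).
    destruct (Hsmall (x u)) as [Hu1 HG]; [lra|].
    assert (lyap_rate K F (x u) * (1 + c * u) <= - c * lyap K (x u) * (1 + c * u))
      by (apply Rmult_le_compat_r; [nra|apply lyap_rate_le; assumption]).
    assert (0 <= c * c * u * lyap K (x u)) by (apply Rmult_le_pos; [nra|lra]).
    lra.
Qed.

Lemma lyap_small_near_E0 (m : R) : 0 < m ->
  exists d, 0 < d /\ forall y, dist3 y (1, 0, 0) < d -> lyap K y < m.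
Proof.
  intro Hm. destruct stability_constants as (_ & _ & HK & _).
  set (d := Rmin 1 (m / (K + 4))).
  assert (Hd : 0 < d) by (apply Rmin_glb_lt; [lra|apply Rdiv_lt_0_compat; lra]).
  assert (Hd1 : d <= 1) by apply Rmin_l.
  assert (HdK : d * (K + 4) <= m).
  { pose proof (Rmin_r 1 (m / (K + 4))) as Hdm. fold d in Hdm.
    apply Rmult_le_compat_r with (r := K + 4) in Hdm; [|lra].
    replace (m / (K + 4) * (K + 4)) with m in Hdm by (field; lra). exact Hdm. }
  exists d. split; [exact Hd|]. intros y Hy. apply (dist3_E0_lt y d Hd) in Hy.
  pose proof (lyap_le_sqdist_E0 K y HK). pose proof (sqdist_E0_nonneg y).
  assert (d * d <= d) by nra. nra.
Qed.

Lemma sirw_E0_lyap_stable : lyap_stable F (1, 0, 0).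
Proof.
  destruct stability_constants as (_ & _ & HK & _ & Hc & _ & _ & _ & Hdelta & _).
  intros eps Heps.
  set (m := Rmin (delta ^ 2) (eps * eps / 3)).
  assert (Hm : 0 < m) by (apply Rmin_glb_lt; nra).
  assert (Hm1 : m <= delta ^ 2) by apply Rmin_l. assert (Hm2 : m <= eps * eps / 3) by apply Rmin_r.
  destruct (lyap_small_near_E0 m Hm) as [d [Hd Hsmall]].
  exists d. split; [exact Hd|]. intros x T HT Hsol Hx0 t Ht.
  specialize (Hsmall _ Hx0).
  pose proof (lyap_decay x T Hsol ltac:(lra) t Ht).
  pose proof (lyap_nonneg K (x t) ltac:(lra)). pose proof (sqdist_E0_le_lyap K (x t) HK).
  assert (0 <= c * t * lyap K (x t)) by (apply Rmult_le_pos; [apply Rmult_le_pos|]; lra).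
  apply dist3_E0_lt; [exact Heps|]. lra.
Qed.

Lemma sirw_E0_loc_attractive : loc_attractive F (1, 0, 0).
Proof.
  destruct stability_constants as (_ & _ & HK & _ & Hc & _ & _ & _ & Hdelta & _).
  destruct (lyap_small_near_E0 (delta ^ 2) ltac:(nra)) as [d [Hd Hsmall]].
  exists d. split; [exact Hd|]. intros x Hsol Hx0. specialize (Hsmall _ Hx0).
  apply (filterlim_dist3_E0_of_decay x (3 * lyap K (x 0)) c Hc).
  intros t Ht.
  pose proof (lyap_decay x (t + 1) (Hsol (t + 1) ltac:(lra)) Hsmall t ltac:(lra)).
  pose proof (sqdist_E0_le_lyap K (x t) HK).
  assert (0 <= 1 + c * t) by (pose proof (Rmult_le_pos c t ltac:(lra) Ht); lra).
  apply Rle_trans with (3 * lyap K (x t) * (1 + c * t)); [apply Rmult_le_compat_r|]; lra.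
Qed.

End Stability.

(** * Instability for R0 > 1 *)

Lemma is_derive_sqdist_E0_along (F : state -> state) (x : R -> state) (t : R) :
  (forall p, coord p -> is_derive (fun u => p (x u)) t (p (F (x t)))) ->
  is_derive (fun u => sqdist_E0 (x u)) t
    (2 * (pS (x t) - 1) * pS (F (x t)) + 2 * pI (x t) * pI (F (x t)) + 2 * pR (x t) * pR (F (x t))).
Proof.
  intro Hx.
  pose proof (Hx pS ltac:(left; auto)) as HS. pose proof (Hx pI ltac:(right; left; auto)) as HI.
  pose proof (Hx pR ltac:(right; right; auto)) as HR.
  unfold sqdist_E0. eapply is_derive_val.
  - apply is_derive_Rplus; [apply is_derive_Rplus|];
      (apply is_derive_pow, is_derive_Rminus; [eassumption|apply is_derive_Rconst]).
  - simpl. ring.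
Qed.

Lemma right_cont0_sqdist_E0 (x : R -> state) :
  (forall p, coord p -> right_cont0 (fun u => p (x u))) -> right_cont0 (fun u => sqdist_E0 (x u)).
Proof.
  intro Hx. unfold sqdist_E0.
  apply right_cont0_plus; [apply right_cont0_plus|];
    apply right_cont0_pow, right_cont0_minus; try apply right_cont0_const; apply Hx; unfold coord; auto.
Qed.

Section Instability.

Variables (alpha beta gamma eta rho : R).
Hypotheses (Halpha : 0 < alpha) (Hbeta : 0 < beta) (Hgamma : 0 < gamma) (Heta : 0 < eta)
  (Hrho : 0 < rho < 1) (HR0 : alpha < rho * beta).

Let F := sirw_field alpha beta gamma eta rho.
Let k0 := rho * beta - alpha.
Let eps0 := Rmin (1 / 2) (k0 / (6 * beta)).

Lemma instability_constants : 0 < k0 /\ 0 < eps0 /\ eps0 <= 1 / 2 /\ 6 * beta * eps0 <= k0.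
Proof.
  assert (Hk0 : 0 < k0) by (unfold k0; lra).
  repeat split; [exact Hk0| |apply Rmin_l|].
  { unfold eps0. apply Rmin_glb_lt; [lra|apply Rdiv_lt_0_compat; lra]. }
  assert (He : eps0 <= k0 / (6 * beta)) by apply Rmin_r.
  apply Rmult_le_compat_l with (r := 6 * beta) in He; [|lra].
  replace (6 * beta * (k0 / (6 * beta))) with k0 in He by (field; lra). exact He.
Qed.

Lemma growth_ge_near_E0 (y : state) : near eps0 y (1, 0, 0) -> k0 / 2 <= growth alpha beta rho y.
Proof.
  intro Hy. destruct instability_constants as (_ & _ & _ & Heps0).
  pose proof (growth_near_E0 alpha beta rho Hbeta Hrho eps0 y Hy) as Hg.
  apply Rabs_le_between' in Hg. assert (k0 = rho * beta - alpha) by reflexivity. lra.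
Qed.

Lemma truncation_id_near_E0 (y : state) : near eps0 y (1, 0, 0) -> F (clamp_state y) = F y.
Proof.
  intro Hy. destruct instability_constants as (_ & _ & Heps0 & _).
  rewrite clamp_state_id; [reflexivity|]. apply in_boxP. apply near_E0P in Hy.
  destruct Hy as (HS & HI & HR). apply Rabs_le_between' in HS.
  repeat split; [apply Rabs_le|..]; lra.
Qed.

Lemma sol_on_while_near_E0 (x : R -> state) (T : R) :
  sol_global (fun y => F (clamp_state y)) x ->
  (forall t, 0 <= t < T -> near eps0 (x t) (1, 0, 0)) -> 0 < T -> sol_on F x T.
Proof.
  intros Hsol Hnear HT. destruct (Hsol T HT) as [Hder Hrc]. split; [|exact Hrc].
  intros t Ht. rewrite <- (truncation_id_near_E0 (x t)) by (apply Hnear; lra). exact (Hder t Ht).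
Qed.

Lemma stable_solution_stays_near_E0 (x : R -> state) (d : R) :
  (forall (z : R -> state) (T : R), 0 < T -> sol_on F z T -> dist3 (z 0) (1, 0, 0) < d ->
     forall t, 0 <= t < T -> dist3 (z t) (1, 0, 0) < eps0 / 2) ->
  sol_global (fun y => F (clamp_state y)) x -> dist3 (x 0) (1, 0, 0) < d ->
  sqdist_E0 (x 0) < eps0 * eps0 -> forall t, 0 <= t -> near eps0 (x t) (1, 0, 0).
Proof.
  intros Hstab Hsol Hx0 Hsq0 t Ht. destruct instability_constants as (_ & Heps0 & _).
  assert (Hcoord : forall u p, 0 < u -> coord p ->
            is_derive (fun v => p (x v)) u (p (F (clamp_state (x u))))).
  { intros u p Hu Hp. apply (sol_on_derive _ x (u + 1) (Hsol (u + 1) ltac:(lra))); [lra|exact Hp]. }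
  apply near_of_sqdist_E0_lt; [exact Heps0|].
  apply (continuous_induction (fun u => sqdist_E0 (x u)) (t + 1)); [lra|exact Hsq0| | | |lra].
  - apply right_cont0_sqdist_E0, (sol_on_right_cont0 _ x 1 (Hsol 1 ltac:(lra))).
  - intros u Hu.
    eapply continuous_of_is_derive, (is_derive_sqdist_E0_along (fun y => F (clamp_state y))).
    intros p Hp. apply Hcoord; [lra|exact Hp].
  - intros m Hm Hbelow.
    assert (Hsol_m : sol_on F x m).
    { apply sol_on_while_near_E0; [exact Hsol| |lra].
      intros u Hu. apply near_of_sqdist_E0_lt; [exact Heps0|]. apply Hbelow, Hu. }
    assert (Hhalf : sqdist_E0 (x m) <= eps0 / 2 * (eps0 / 2)).
    { apply (le_of_continuous_left (fun u => sqdist_E0 (x u))); [lra| |].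
      - eapply continuous_of_is_derive, (is_derive_sqdist_E0_along (fun y => F (clamp_state y))).
        intros p Hp. apply Hcoord; [lra|exact Hp].
      - intros u Hu. apply dist3_E0_lt; [lra|].
        apply (Hstab x m); [lra|exact Hsol_m|exact Hx0|exact Hu]. }
    nra.
Qed.

Lemma infected_grow_near_E0 (x : R -> state) (i0 : R) : 0 < i0 -> pI (x 0) = i0 ->
  (forall T, 0 < T -> sol_on F x T) -> (forall t, 0 <= t -> near eps0 (x t) (1, 0, 0)) ->
  forall t, 0 < t -> i0 + k0 / 2 * i0 * t <= pI (x t).
Proof.
  intros Hi0 Hx0 Hsol Hnear t Ht. destruct instability_constants as (Hk0 & _).
  assert (HI : forall T u, 0 < T -> 0 < u < T ->
            is_derive (fun v => pI (x v)) u (pI (x u) * growth alpha beta rho (x u))).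
  { intros T u HT Hu. rewrite <- (sirw_field_pI alpha beta gamma eta rho).
    apply (sol_on_derive F x T (Hsol T HT)); [exact Hu|right; left; reflexivity]. }
  assert (HrcI : right_cont0 (fun v => pI (x v)))
    by (apply (sol_on_right_cont0 F x 1 (Hsol 1 ltac:(lra))); right; left; reflexivity).
  assert (Hpos : forall u, 0 <= u < t + 1 -> i0 <= pI (x u)).
  { intros u Hu.
    enough (0 - pI (x u) <= 0 - pI (x 0)) by lra.
    apply (barrier_le_init (fun v => 0 - pI (x v))
             (fun v => 0 - pI (x v) * growth alpha beta rho (x v)) (t + 1) 0); [| |lra| |exact Hu].
    - apply right_cont0_minus; [apply right_cont0_const|exact HrcI].
    - intros v Hv. apply is_derive_Rminus; [apply is_derive_Rconst|apply (HI (t + 1)); lra].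
    - intros v Hv Hneg. pose proof (growth_ge_near_E0 (x v) (Hnear v ltac:(lra))).
      assert (0 <= pI (x v) * growth alpha beta rho (x v)) by (apply Rmult_le_pos; lra). lra. }
  enough (i0 + k0 / 2 * i0 * t - pI (x t) <= i0 + k0 / 2 * i0 * 0 - pI (x 0)) by lra.
  apply (derive_nonpos_le_init (fun v => i0 + k0 / 2 * i0 * v - pI (x v))
           (fun v => k0 / 2 * i0 - pI (x v) * growth alpha beta rho (x v))); [exact Ht| | |].
  - apply right_cont0_minus; [|exact HrcI].
    apply right_cont0_plus; [apply right_cont0_const|].
    apply right_cont0_mult; [apply right_cont0_const|apply right_cont0_id].
  - intros v Hv. eapply is_derive_val.
    + apply is_derive_Rminus; [apply is_derive_Rplus|apply (HI (t + 1)); lra].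
      * apply is_derive_Rconst.
      * apply is_derive_scal, is_derive_Rid.
    + ring.
  - intros v Hv. pose proof (growth_ge_near_E0 (x v) (Hnear v ltac:(lra))).
    pose proof (Hpos v ltac:(lra)).
    assert (k0 / 2 * i0 <= k0 / 2 * pI (x v)) by (apply Rmult_le_compat_l; lra).
    assert (k0 / 2 * pI (x v) <= pI (x v) * growth alpha beta rho (x v))
      by (rewrite Rmult_comm; apply Rmult_le_compat_l; lra).
    lra.
Qed.

Theorem sirw_E0_unstable : unstable F (1, 0, 0).
Proof.
  intro Hst. destruct instability_constants as (Hk0 & Heps0 & _).
  destruct (Hst (eps0 / 2)) as [d [Hd Hstab]]; [lra|].
  set (i0 := Rmin d eps0 / 2).
  assert (Hi0 : 0 < i0) by (apply Rdiv_lt_0_compat; [apply Rmin_glb_lt|]; lra).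
  assert (Hi0d : i0 < d) by (pose proof (Rmin_l d eps0); unfold i0; lra).
  assert (Hi0e : i0 < eps0) by (pose proof (Rmin_r d eps0); unfold i0; lra).
  destruct (truncated_sirw_field_global_solution alpha beta gamma eta rho Halpha Hbeta Hgamma Heta Hrho
              (1, i0, 0)) as [x [Hx0 Hsol]].
  assert (Hsq0 : sqdist_E0 (x 0) = i0 * i0) by (rewrite Hx0; unfold sqdist_E0, pS, pI, pR; simpl; ring).
  assert (Hnear : forall t, 0 <= t -> near eps0 (x t) (1, 0, 0)).
  { apply (stable_solution_stays_near_E0 x d Hstab Hsol); [|rewrite Hsq0; nra].
    apply dist3_E0_lt; [exact Hd|]. rewrite Hsq0. nra. }
  set (t := 2 * eps0 / (k0 * i0)).
  assert (Ht : 0 < t) by (apply Rdiv_lt_0_compat; [lra|nra]).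
  assert (Hgrow := infected_grow_near_E0 x i0 Hi0 ltac:(rewrite Hx0; reflexivity)
    (fun T HT => sol_on_while_near_E0 x T Hsol (fun u Hu => Hnear u (proj1 Hu)) HT) Hnear t Ht).
  replace (k0 / 2 * i0 * t) with eps0 in Hgrow by (unfold t; field; lra).
  pose proof (proj1 (proj2 (proj1 (near_E0P _ _) (Hnear t ltac:(lra))))) as HI.
  apply Rabs_le_between in HI. lra.
Qed.

End Instability.

Lemma basic_R0_compare (alpha beta rho : R) : 0 < alpha ->
  (basic_R0 alpha beta rho < 1 -> rho * beta < alpha) /\
  (basic_R0 alpha beta rho > 1 -> alpha < rho * beta).
Proof.
  intro Halpha. unfold basic_R0. split; intro H.
  - apply Rlt_div_l in H; lra.
  - apply Rlt_div_r in H; lra.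
Qed.

Theorem theorem1 (alpha beta gamma eta rho : R) :
  0 < alpha -> 0 < beta -> 0 < gamma -> 0 < eta -> 0 < rho < 1 ->
  alpha <= gamma ->
  (* (a) the disease-free equilibria are exactly (1,0,0) *)
  (forall s i r : R, i = 0 ->
     (is_equilibrium (sirw_field alpha beta gamma eta rho) (s, i, r)
      <-> (s, i, r) = (1, 0, 0))) /\
  (* (b) stability of E0 according to R0 *)
  (basic_R0 alpha beta rho < 1 ->
     loc_asymp_stable (sirw_field alpha beta gamma eta rho) (1, 0, 0)) /\
  (basic_R0 alpha beta rho > 1 ->
     unstable (sirw_field alpha beta gamma eta rho) (1, 0, 0)).
Proof.
  intros Halpha Hbeta Hgamma Heta Hrho _.
  destruct (basic_R0_compare alpha beta rho Halpha) as [Hlt Hgt].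
  split; [|split].
  - apply sirw_disease_free_equilibria; assumption.
  - intro HR0. split; [apply sirw_E0_lyap_stable|apply sirw_E0_loc_attractive]; auto.
  - intro HR0. apply sirw_E0_unstable; auto.
Qed.
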